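(* Let $n\ge 4$ be an even integer and $k\ge 3$ an integer. Then $\psi(C_n\square P_k)=4$.
   Context: All graphs are finite and connected; $d(u,v)$ is the shortest-path distance. $C_n$ is the cycle on $n$ vertices and $P_k$ the path on $k$ vertices. The cartesian product $G\square H$ has vertex set $V(G)\times V(H)$, with $(g_1,h_1)$ adjacent to $(g_2,h_2)$ iff either $h_1=h_2$ and $g_1g_2\in E(G)$, or $g_1=g_2$ and $h_1h_2\in E(H)$. For an ordered set $Q=\{q_1,\dots,q_l\}$ of vertices, $r(x|Q)=(d(x,q_1),\dots,d(x,q_l))$. $Q$ is a doubly resolving set of $G$ if for any two distinct vertices $x,y$ of $G$, $r(x|Q)-r(y|Q)\neq\lambda(1,\dots,1)$ for every integer $\lambda$. $\psi(G)$ denotes the minimum size of a doubly resolving set of $G$. *)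

From mathcomp Require Import all_boot all_order all_algebra.
Set Implicit Arguments. Unset Strict Implicit. Unset Printing Implicit Defensive.

Definition walk_len (T : finType) (e : rel T) (x y : T) (m : nat) : bool :=
  [exists p : m.-tuple T, path e x p && (last x p == y)].

(* shortest-path distance: least m such that a walk of length m from x to y
   exists (in a connected graph such an m is < #|T|). *)
Definition dist (T : finType) (e : rel T) (x y : T) : nat :=
  find (walk_len e x y) (iota 0 #|T|).

Definition cycle_rel (n : nat) : rel 'I_n :=
  fun i j => (j == (i.+1 %% n) :> nat) || (i == (j.+1 %% n) :> nat).

Definition path_rel (k : nat) : rel 'I_k :=
  fun i j => (j == i.+1 :> nat) || (i == j.+1 :> nat).

Definition boxprod (T1 T2 : finType) (e1 : rel T1) (e2 : rel T2) : rel (T1 * T2) :=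
  fun a b => ((a.2 == b.2) && e1 a.1 b.1) || ((a.1 == b.1) && e2 a.2 b.2).

Definition doubly_resolving (T : finType) (e : rel T) (Q : {set T}) : Prop :=
  forall x y : T, x != y ->
    ~ exists lam : int, forall q, q \in Q ->
        ((dist e x q)%:Z - (dist e y q)%:Z)%R = lam.

Definition psi_eq (T : finType) (e : rel T) (m : nat) : Prop :=
  (exists Q : {set T}, doubly_resolving e Q /\ #|Q| = m) /\
  (forall Q : {set T}, doubly_resolving e Q -> m <= #|Q|).

(* In C_n □ P_k the distance between (i, j) and (a, b) is the cycle distance
   of i and a plus |j - b|.  For n = 2m the vertices (0,0), (m,0), (1,0) and
   (0,k-1) doubly resolve the graph: comparing with (0,0), the vertex (0,k-1)
   recovers the row, (m,0) the cycle distance to column 0 (the cycle distances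
   to two antipodal vertices add up to m), and (1,0) the side of column 0.
   Conversely three vertices never suffice: if none of them lies in the bottom
   row, two vertically adjacent vertices of the bottom two rows have constant
   distance difference to all of them, and symmetrically for the top row.
   Otherwise, after rotating the cycle so that a bottom vertex sits at (0,0),
   a finite case analysis on the columns of the top vertex and of the third
   vertex produces an explicit unresolved pair. *)

From mathcomp Require Import all_boot all_order all_algebra zify.
Set Implicit Arguments. Unset Strict Implicit. Unset Printing Implicit Defensive.

Definition geodesic (T : finType) (e : rel T) (D : T -> T -> nat) : Prop :=
  [/\ forall x z, D x z = 0 <-> x = z,
      forall x y z, e x y -> D x z <= (D y z).+1
    & forall x z, 0 < D x z -> exists2 y, e x y & (D y z).+1 = D x z].

Section GeodesicDistance.

Variables (T : finType) (e : rel T) (D : T -> T -> nat).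
Hypothesis geoD : geodesic e D.

Lemma geodesic_le_size x p : path e x p -> D x (last x p) <= size p.
Proof.
have [D0 De _] := geoD.
elim: p x => [|y p IHp] x /=; first by rewrite (D0 x x).2.
by case/andP=> exy /IHp; have := De _ _ (last y p) exy; lia.
Qed.

Lemma geodesic_walk x z : walk_len e x z (D x z).
Proof.
have [D0 _ Dstep] := geoD.
move Dxz: (D x z) => d; elim: d x Dxz => [|d IHd] x Dxz.
  by apply/existsP; exists [tuple]; rewrite /= (D0 x z).1.
have [|y exy Dyz] := Dstep x z; first by rewrite Dxz.
have /existsP[p /andP[yp /eqP <-]] : walk_len e y z d by apply: IHd; lia.
by apply/existsP; exists (cons_tuple y p); rewrite /= exy yp eqxx.
Qed.

Lemma geodesic_attains x z i : i <= D x z -> exists t, D t z = i.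
Proof.
have [_ _ Dstep] := geoD.
move Dxz: (D x z) => d; elim: d x Dxz => [|d IHd] x Dxz le_iD.
  by exists x; lia.
have [->|ne_id] := eqVneq i d.+1; first by exists x.
have [|y _ Dyz] := Dstep x z; first by rewrite Dxz.
by apply: (IHd y); lia.
Qed.

Lemma geodesic_lt_card x z : D x z < #|T|.
Proof.
have sub : {subset iota 0 (D x z).+1 <= map (D^~ z) (enum T)}.
  move=> i; rewrite mem_iota add0n => /andP[_ le_iD].
  have [t <-] := geodesic_attains (le_iD : i <= D x z).
  by apply: map_f; rewrite mem_enum.
by have := uniq_leq_size (iota_uniq 0 _) sub; rewrite size_iota size_map -cardE.
Qed.

Lemma geodesic_dist x z : dist e x z = D x z.
Proof.
rewrite /dist -(subnKC (ltnW (geodesic_lt_card x z))) iotaD find_cat size_iota.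
have -> : has (walk_len e x z) (iota 0 (D x z)) = false.
  apply/hasPn => m; rewrite mem_iota add0n => /andP[_ lt_mD].
  apply/existsP=> -[p /andP[xp /eqP lastp]].
  by have := geodesic_le_size xp; rewrite lastp size_tuple; lia.
have [d ->] : exists d, #|T| - D x z = d.+1.
  by exists (#|T| - D x z).-1; have := geodesic_lt_card x z; lia.
by rewrite /= add0n geodesic_walk addn0.
Qed.

End GeodesicDistance.

Lemma geodesic_boxprod (T1 T2 : finType) (e1 : rel T1) (e2 : rel T2) D1 D2 :
  geodesic e1 D1 -> geodesic e2 D2 ->
  geodesic (boxprod e1 e2) (fun x y => D1 x.1 y.1 + D2 x.2 y.2).
Proof.
move=> [D1_0 D1e D1step] [D2_0 D2e D2step]; split.
- move=> [x1 x2] [z1 z2] /=; split=> [D0 | [-> ->]].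
    by rewrite (D1_0 x1 z1).1 1?(D2_0 x2 z2).1 //; lia.
  by rewrite (D1_0 z1 z1).2 ?(D2_0 z2 z2).2.
- move=> [x1 x2] [y1 y2] [z1 z2]; rewrite /boxprod /=.
  case/orP=> /andP[/eqP <- exy]; [have := D1e _ _ z1 exy | have := D2e _ _ z2 exy]; lia.
- move=> [x1 x2] [z1 z2] /=.
  have [D1x0 | D1pos _] := posnP (D1 x1 z1).
    rewrite D1x0 add0n => /D2step[y2 exy <-].
    by exists (x1, y2); rewrite /boxprod /= ?eqxx ?exy ?orbT // D1x0.
  have [y1 exy <-] := D1step _ _ D1pos.
  by exists (y1, x2); rewrite /boxprod /= ?eqxx ?exy.
Qed.

Lemma geodesic_path_rel k : geodesic (@path_rel k) (fun i j => `|i - j|).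
Proof.
split.
- by move=> i j; split=> [ij0 | ->]; [apply: val_inj => /=; lia | rewrite distnn].
- by move=> i j l; rewrite /path_rel => /orP[] /eqP; lia.
- move=> i j ijpos; have ltik := ltn_ord i; have ltjk := ltn_ord j.
  have [ltij | ltji] : i < j \/ j < i by lia.
    have ltSik : i.+1 < k by lia.
    by exists (Ordinal ltSik); rewrite /path_rel /= ?eqxx //; lia.
  have ltPik : i.-1 < k by lia.
  exists (Ordinal ltPik); rewrite /path_rel /=; last lia.
  by apply/orP; right; apply/eqP; lia.
Qed.

Definition cycle_dist (n a b : nat) : nat := minn `|a - b| (n - `|a - b|).

Lemma cycle_relE n (i j : 'I_n) :
  cycle_rel i j = (`|i - j| == 1) || (`|i - j| == n.-1).
Proof.
have ltin := ltn_ord i; have ltjn := ltn_ord j.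
have modS (l : 'I_n) : l.+1 %% n = if l.+1 == n then 0 else l.+1.
  by case: eqP => [-> | ?]; rewrite ?modnn // modn_small // ltn_neqAle ltn_ord andbT; apply/eqP.
rewrite /cycle_rel !modS.
by case: (eqVneq i.+1 n) => ?; case: (eqVneq j.+1 n) => ?;
  apply/idP/idP => /orP[] /eqP ?; apply/orP; lia.
Qed.

Lemma geodesic_cycle_rel n : geodesic (@cycle_rel n) (fun i j => cycle_dist n i j).
Proof.
split.
- move=> i j; have := ltn_ord i; have := ltn_ord j; rewrite /cycle_dist => ltjn ltin.
  by split=> [ij0 | ->]; [apply: ord_inj; lia | lia].
- move=> i j z; rewrite cycle_relE /cycle_dist.
  by have := ltn_ord i; have := ltn_ord j; have := ltn_ord z; lia.
- move=> i z Dpos; have ltin := ltn_ord i; have ltzn := ltn_ord z.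
  have [t [lttn itE tzE]] : exists t : nat, [/\ t < n, (`|i - t| == 1) || (`|i - t| == n.-1)
                                     & (cycle_dist n t z).+1 = cycle_dist n i z].
    move: Dpos; rewrite /cycle_dist => Dpos.
    (* Step along the shorter arc towards z, wrapping around between 0 and n - 1. *)
    have : (i < z /\ 2 * (z - i) <= n) \/ (z < i /\ n < 2 * (i - z) /\ i.+1 < n) \/
           (z < i /\ 2 * (i - z) <= n) \/ (i < z /\ n < 2 * (z - i) /\ 0 < i) \/
           (z < i /\ n < 2 * (i - z) /\ i.+1 = n) \/ (i < z /\ n < 2 * (z - i) /\ i = 0 :> nat).
      by lia.
    by case=> [|[|[|[|[]]]]] ?; [exists i.+1 | exists i.+1 | exists i.-1 | exists i.-1
                                 | exists 0 | exists n.-1]; split; lia.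
  by exists (Ordinal lttn); rewrite ?cycle_relE.
Qed.

Local Notation grid n k := (boxprod (@cycle_rel n) (@path_rel k)).

Lemma dist_grid n k (x y : 'I_n * 'I_k) :
  dist (grid n k) x y = cycle_dist n x.1 y.1 + `|x.2 - y.2|.
Proof.
exact: geodesic_dist (geodesic_boxprod (geodesic_cycle_rel n) (geodesic_path_rel k)) x y.
Qed.

Section Unresolved.

Variables (T : finType) (e : rel T).

Definition unresolved (Q : {set T}) (x y : T) : Prop :=
  {in Q &, forall q q', dist e x q + dist e y q' = dist e y q + dist e x q'}.

Lemma doubly_resolvingP (Q : {set T}) :
  doubly_resolving e Q <-> forall x y, unresolved Q x y -> x = y.
Proof.
split=> [resQ x y unres | unres_eq x y neq_xy [lam lamE]].
  apply/eqP/negPn/negP => neq_xy; apply: (resQ x y neq_xy).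
  have [Q0 | [q0 q0Q]] := set_0Vmem Q; first by exists 0%R => q; rewrite Q0 inE.
  exists ((dist e x q0)%:Z - (dist e y q0)%:Z)%R => q qQ.
  by have := unres q q0 qQ q0Q; lia.
apply/(negP neq_xy)/eqP/unres_eq => q q' qQ q'Q.
by have := lamE q qQ; have := lamE q' q'Q; lia.
Qed.

Lemma unresolved_base (Q : {set T}) x y q0 :
  {in Q, forall q, dist e x q + dist e y q0 = dist e y q + dist e x q0} -> unresolved Q x y.
Proof. by move=> base q q' /base + /base; lia. Qed.

Lemma unresolvedS (Q Q' : {set T}) x y : Q \subset Q' -> unresolved Q' x y -> unresolved Q x y.
Proof. by move=> /subsetP sub unres q q' /sub qQ' /sub; apply: unres. Qed.

End Unresolved.

Lemma grid_doubly_resolving4 n k : 4 <= n -> ~~ odd n -> 1 < k ->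
  exists Q : {set 'I_n * 'I_k}, doubly_resolving (grid n k) Q /\ #|Q| = 4.
Proof.
move=> n_ge4 n_even k_gt1; have [m nE] : exists m, n = m.*2 by exists n./2; lia.
have lt0n : 0 < n by lia. have ltmn : m < n by lia. have lt1n : 1 < n by lia.
have lt0k : 0 < k by lia. have ltPk : k.-1 < k by lia.
pose o := (Ordinal lt0n, Ordinal lt0k).
pose Q := [set:: [:: o; (Ordinal ltmn, Ordinal lt0k); (Ordinal lt0n, Ordinal ltPk);
                      (Ordinal lt1n, Ordinal lt0k)]].
exists Q; split.
  apply/doubly_resolvingP => -[i j] [i' j'] unres.
  have oQ : o \in Q by rewrite !inE eqxx.
  have unres_o q : q \in Q -> _ := unres q o ^~ oQ.
  have := unres_o (Ordinal ltmn, Ordinal lt0k); have := unres_o (Ordinal lt0n, Ordinal ltPk).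
  have := unres_o (Ordinal lt1n, Ordinal lt0k).
  rewrite !inE !eqxx ?orbT !dist_grid /= => /(_ isT) next /(_ isT) top /(_ isT) antipode.
  have jE : j = j' :> nat by move: top; have := ltn_ord j; have := ltn_ord j'; lia.
  have antipodal_sum (l : 'I_n) : cycle_dist n l 0 + cycle_dist n l m = m.
    by have := ltn_ord l; rewrite /cycle_dist; lia.
  have colE : cycle_dist n i 0 = cycle_dist n i' 0.
    by move: antipode; have := antipodal_sum i; have := antipodal_sum i'; lia.
  have := ltn_ord i; have := ltn_ord i' => lti' lti; congr (_, _); apply: ord_inj => //.
  have [//|reflected] : i = i' :> nat \/ i + i' = n.
    by move: colE; rewrite /cycle_dist; lia.
  by move: next; rewrite colE /cycle_dist; lia.
rewrite cardsE; apply/card_uniqP; rewrite /= !inE !xpair_eqE -!val_eqE /=; lia.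
Qed.

Definition unresolved_from_origin (m k a2 a3 b3 : nat) : Prop :=
  exists u j v j', [/\ u < m.*2, v < m.*2, j < k, j' < k & (u, j) != (v, j')] /\
    forall a b, (a, b) \in [:: (a2, k.-1); (a3, b3)] ->
      cycle_dist m.*2 u 0 + j + (cycle_dist m.*2 v a + `|j' - b|) =
      cycle_dist m.*2 v 0 + j' + (cycle_dist m.*2 u a + `|j - b|).

(* Rewriting every distance to the linear form valid in the current case keeps
   the final lia call small. *)
Local Ltac linearize :=
  repeat match goal with
  | |- context [cycle_dist ?n ?u ?a] =>
      first [ rewrite (_ : cycle_dist n u a = u - a); last by rewrite /cycle_dist; lia
            | rewrite (_ : cycle_dist n u a = a - u); last by rewrite /cycle_dist; lia
            | rewrite (_ : cycle_dist n u a = n - (u - a)); last by rewrite /cycle_dist; lia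
            | rewrite (_ : cycle_dist n u a = n - (a - u)); last by rewrite /cycle_dist; lia ]
  | |- context [`|?j - ?b|] =>
      first [ rewrite (_ : `|j - b| = j - b); last by lia
            | rewrite (_ : `|j - b| = b - j); last by lia ]
  end.

Local Ltac witness u j v j' :=
  exists u, j, v, j'; split;
    [ rewrite xpair_eqE; split; lia
    | move=> ? ?; rewrite !inE => /orP[] /eqP[-> ->]; linearize; lia ].

(* The witnesses (u, j), (v, j') are of four kinds: vertical neighbours, when
   all points lie on one side of a row gap; horizontal neighbours, when all
   columns lie on one half of the cycle; diagonal neighbours, when a diameter
   separates the columns of the lower points from those of the upper points;
   and vertices mirror-symmetric about an axis through columns c and c + m. *)
Lemma unresolved_from_origin_interior m k a2 a3 b3 :
  2 <= m -> 3 <= k -> a2 < m.*2 -> a3 < m.*2 -> 0 < b3 < k.-1 ->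
  unresolved_from_origin m k a2 a3 b3.
Proof.
move=> m_ge2 k_ge3 a2_lt a3_lt b3_mid.
have [m_le_a2 | a2_lt_m] := leqP m a2.
  have [a3_lt_m | m_le_a3] := ltnP a3 m.
    by witness 0 k.-1 (m.*2.-1) k.-2.
  by witness 0 1 (m.*2.-1) 0.
have [a2_0 | a2_gt0] := posnP a2; last first.
  have : [|| a3 == 0, m < a3 | 0 < a3 <= m] by lia.
  by case/or3P=> ?; [witness m.+1 k.-1 m k.-2 | witness m.+1 k.-1 m k.-2 | witness m.+1 1 m 0].
have : [|| a3 < m, m < a3 | a3 == m] by lia.
by case/or3P=> ?; [witness 0 0 (m.*2.-1) 0 | witness m.+1 0 m 0 | witness 1 0 (m.*2.-1) 0].
Qed.

Lemma unresolved_from_origin_bottom m k a2 a3 :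
  2 <= m -> 3 <= k -> a2 < m.*2 -> a3 < m.*2 -> unresolved_from_origin m k a2 a3 0.
Proof.
move=> m_ge2 k_ge3 a2_lt a3_lt.
have [a3_lt_m | m_lt_a3 | ->] := ltngtP a3 m.
- have : [|| a2 <= a3, m <= a2 | a3 < a2 < m] by lia.
  by case/or3P=> ?; [witness 0 0 (m.*2.-1) 0 | witness 0 1 (m.*2.-1) 0
                    | witness (a3 + m).+1 1 (a3 + m) 0].
- have : [|| a2 == 0, a3 <= a2, 0 < a2 <= m | m < a2 < a3] by lia.
  by case/or4P=> ?; [witness m.+1 0 m 0 | witness m.+1 0 m 0 | witness m.+1 1 m 0
                    | witness a3 1 a3.-1 0].
- have : [|| a2 == 0, a2 == m, 0 < a2 < m | m < a2] by lia.
  by case/or4P=> ?; [witness 1 0 (m.*2.-1) 0 | witness 1 0 (m.*2.-1) 0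
                    | witness 1 0 (m.*2.-1) 1 | witness 1 1 (m.*2.-1) 0].
Qed.

Lemma unresolved_from_origin_top m k a2 a3 :
  2 <= m -> 3 <= k -> a2 < m.*2 -> a3 < m.*2 -> unresolved_from_origin m k a2 a3 k.-1.
Proof.
wlog a2_le_a3 : a2 a3 / a2 <= a3.
  move=> base m_ge2 k_ge3 a2_lt a3_lt; have [/base|/ltnW/base] := leqP a2 a3; first exact.
  move=> /(_ m_ge2 k_ge3 a3_lt a2_lt) [u [j [v [j' [bounds unres]]]]].
  exists u, j, v, j'; split=> // a b ab; apply: unres.
  by rewrite !inE orbC -!inE in ab *.
move=> m_ge2 k_ge3 a2_lt a3_lt.
have [near | far | antipodal] := ltngtP (a3 - a2) m.
- have : [|| a2 == 0, 0 < a2 <= m | m < a2] by lia.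
  by case/or3P=> ?; [witness 0 0 (m.*2.-1) 0 | witness a2 0 a2.-1 1
                    | witness (a3 - m).+1 0 (a3 - m) 1].
- by witness a3 0 a3.-1 0.
- have [a2_0|a2_gt0] := posnP a2; first by witness 1 0 (m.*2.-1) 0.
  by witness a2.+1 0 a2.-1 1.
Qed.

Lemma unresolved_from_origin_any m k a2 a3 b3 :
  2 <= m -> 3 <= k -> a2 < m.*2 -> a3 < m.*2 -> b3 < k ->
  unresolved_from_origin m k a2 a3 b3.
Proof.
move=> m_ge2 k_ge3 a2_lt a3_lt b3_lt.
have [-> | b3_gt0] := posnP b3; first exact: unresolved_from_origin_bottom.
have [-> | b3_ne_top] := eqVneq b3 k.-1; first exact: unresolved_from_origin_top.
by apply: unresolved_from_origin_interior => //; lia.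
Qed.

Lemma cycle_dist_rot n r u a : r < n -> u < n -> a < n ->
  cycle_dist n ((u + r) %% n) ((a + r) %% n) = cycle_dist n u a.
Proof.
move=> ltrn ltun ltan.
have modE x : x < n + n -> x %% n = if x < n then x else x - n.
  move=> ltx2n; case: (ltnP x n) => [ltxn | lenx]; first exact: modn_small.
  by rewrite -{1}(subnK lenx) modnDr modn_small //; lia.
rewrite !modE; try lia.
by case: ltnP => ?; case: ltnP => ?; rewrite /cycle_dist; lia.
Qed.

Lemma rot_subK n r a : r <= n -> a < n -> ((a + (n - r)) %% n + r) %% n = a.
Proof. by move=> lern ltan; rewrite modnDml -addnA subnK // modnDr modn_small. Qed.

Lemma grid_unresolved_bottom_top n k (q1 q2 q3 : 'I_n * 'I_k) :
  4 <= n -> ~~ odd n -> 3 <= k -> q1.2 = 0 :> nat -> q2.2 = k.-1 :> nat ->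
  exists x y, x != y /\ unresolved (grid n k) [set q1; q2; q3] x y.
Proof.
move=> n_ge4 n_even k_ge3 q1_bot q2_top.
have [m nE] : exists m, n = m.*2 by exists n./2; lia.
have n_gt0 : 0 < n by lia.
pose r := nat_of_ord q1.1; have ltrn : r < n := ltn_ord _.
pose unrot (a : 'I_n) := (a + (n - r)) %% n.
have unrot_lt a : unrot a < m.*2 by rewrite -nE ltn_pmod.
have unrotK (a : 'I_n) : a = (unrot a + r) %% n :> nat by rewrite rot_subK // ltnW.
have m_ge2 : 2 <= m by lia.
have [u [j [v [j' [[ltu ltv ltj ltj' neq] unres]]]]] :=
  unresolved_from_origin_any m_ge2 k_ge3 (unrot_lt q2.1) (unrot_lt q3.1) (ltn_ord q3.2).
rewrite -nE in ltu ltv unres unrot_lt.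
pose rot w : 'I_n := Ordinal (ltn_pmod (w + r) n_gt0).
have dist_rot w c (q : 'I_n * 'I_k) a : w < n -> a < n -> q.1 = (a + r) %% n :> nat ->
    dist (grid n k) (rot w, c) q = cycle_dist n w a + `|c - q.2|.
  by move=> ltw lta q1E; rewrite dist_grid /= q1E cycle_dist_rot.
exists (rot u, Ordinal ltj), (rot v, Ordinal ltj'); split.
  apply: contra neq => /eqP[[ruv] ->].
  rewrite xpair_eqE eqxx andbT; apply/eqP.
  have : cycle_dist n ((u + r) %% n) ((v + r) %% n) = 0 by rewrite ruv /cycle_dist; lia.
  by rewrite cycle_dist_rot // /cycle_dist; lia.
have q1E : q1.1 = (0 + r) %% n :> nat by rewrite modn_small.
apply: (@unresolved_base _ _ _ _ _ q1) => q; rewrite !inE -orbA => /or3P[] /eqP ->; first lia.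
- rewrite !(dist_rot _ _ q1 0) // !(dist_rot _ _ q2 (unrot q2.1)) // q1_bot q2_top /=.
  by have := unres (unrot q2.1) k.-1; rewrite !inE eqxx => /(_ isT); lia.
- rewrite !(dist_rot _ _ q1 0) // !(dist_rot _ _ q3 (unrot q3.1)) // q1_bot /=.
  by have := unres (unrot q3.1) q3.2; rewrite !inE eqxx orbT => /(_ isT); lia.
Qed.

Lemma subset_set3 (T : finType) (A : {set T}) a b :
  a \in A -> b \in A -> a != b -> #|A| <= 3 -> exists c, A \subset [set a; b; c].
Proof.
move=> aA bA neq_ab A_le3.
have R_le1 : #|A :\ b :\ a| <= 1.
  by move: A_le3; rewrite (cardsD1 b) bA (cardsD1 a (A :\ b)) !inE neq_ab aA; lia.
suff [c Rc] : exists c, A :\ b :\ a \subset [set c].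
  exists c; apply/subsetP => x xA; rewrite !inE.
  have [//|xa] := eqVneq x a; have [//|xb] := eqVneq x b.
  by rewrite -in_set1; apply: (subsetP Rc); rewrite !inE xa xb.
have [-> | [c cR]] := set_0Vmem (A :\ b :\ a); first by exists a; rewrite sub0set.
by exists c; apply/subsetP => x xR; rewrite inE; apply/eqP; apply: (card_le1_eqP R_le1).
Qed.

Lemma grid_unresolved_vertical n k (Q : {set 'I_n * 'I_k}) (c : 'I_n) (j j' : 'I_k) :
  j' = j.+1 :> nat -> {in Q &, forall q q' : 'I_n * 'I_k, (q.2 <= j) = (q'.2 <= j)} ->
  unresolved (grid n k) Q (c, j) (c, j').
Proof.
by move=> j'E same q q' qQ q'Q; rewrite !dist_grid /=; have := same q q' qQ q'Q; lia.
Qed.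

Lemma grid_doubly_resolving_card n k (Q : {set 'I_n * 'I_k}) :
  4 <= n -> ~~ odd n -> 3 <= k -> doubly_resolving (grid n k) Q -> 4 <= #|Q|.
Proof.
move=> n_ge4 n_even k_ge3 /doubly_resolvingP resQ; rewrite leqNgt; apply/negP => Q_le3.
suff [x [y [/eqP neq_xy unres]]] : exists x y, x != y /\ unresolved (grid n k) Q x y.
  exact/neq_xy/resQ.
have n_gt0 : 0 < n by lia.
have vertical j : j.+2 <= k ->
    {in Q &, forall q q' : 'I_n * 'I_k, (q.2 <= j) = (q'.2 <= j)} ->
    exists x y, x != y /\ unresolved (grid n k) Q x y.
  move=> ltSjk same; have ltjk : j < k by lia.
  exists (Ordinal n_gt0, Ordinal ltjk), (Ordinal n_gt0, Ordinal ltSjk).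
  by split; [apply/eqP => -[] []; lia | exact: grid_unresolved_vertical].
have [q1 /andP[q1Q /eqP q1_bot] | no_bot] := pickP [pred q in Q | q.2 == 0 :> nat]; last first.
  apply: (vertical 0); first lia; move=> q q' qQ q'Q.
  by move: (no_bot q) (no_bot q') => /=; rewrite qQ q'Q /=; lia.
have [q2 /andP[q2Q /eqP q2_top] | no_top] := pickP [pred q in Q | q.2 == k.-1 :> nat]; last first.
  apply: (vertical k.-2); first lia; move=> q q' qQ q'Q.
  by move: (no_top q) (no_top q') (ltn_ord q.2) (ltn_ord q'.2) => /=; rewrite qQ q'Q /=; lia.
have [|q3 Qsub] := subset_set3 q1Q q2Q _ Q_le3.
  by apply/eqP=> q12; move: q1_bot; rewrite q12 q2_top; lia.
have [x [y [neq unres]]] := grid_unresolved_bottom_top q3 n_ge4 n_even k_ge3 q1_bot q2_top.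
by exists x, y; split; last exact: unresolvedS Qsub unres.
Qed.

Theorem lemma3p2 (n k : nat) :
  4 <= n -> ~~ odd n -> 3 <= k ->
  psi_eq (boxprod (@cycle_rel n) (@path_rel k)) 4.
Proof.
move=> n_ge4 n_even k_ge3; split; first by apply: grid_doubly_resolving4 => //; lia.
by move=> Q; apply: grid_doubly_resolving_card.
Qed.
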